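(* Let $X$ be a Banach space as described in the context, let $f\in X$, and assume $\inf_{n\in\mathbb{N}}\|z^n\|>0$. If there exists a sequence $p_n\in\mathcal{P}_n[\mathbb{Z}]$ with $\lim_{n\to\infty}\|f-p_n\|=0$, then $f$ is a polynomial with integer coefficients.
   Context: $\mathbb{D}=\{z\in\mathbb{C}:|z|<1\}$. $X$ is a complex Banach space of functions analytic in $\mathbb{D}$ whose norm $\|\cdot\|$ satisfies: (i) $\|f(\cdot\, e^{it})\|=\|f(\cdot)\|$ for all $t\in\mathbb{R}$ and $f\in X$; (ii) $\|f\|<\infty$ for every entire function $f$; (iii) for all $f\in X$ and $g\in L[0,2\pi]$, $\big\|\frac{1}{2\pi}\int_0^{2\pi} f(ze^{it})g(t)\,dt\big\|\le \frac{1}{2\pi}\int_0^{2\pi}|g(t)|\,dt\cdot\|f\|$. $\|z^n\|$ is the norm in $X$ of $z\mapsto z^n$. A complex number is called an integer if its real and imaginary parts are integers; $\mathcal{P}_n[\mathbb{Z}]$ is the set of complex polynomials of degree at most $n-1$ with integer coefficients in this sense. *)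

From Stdlib Require Import Reals ZArith.
From mathcomp Require Import all_boot all_algebra.
From mathcomp Require Import all_classical all_reals all_analysis.
From mathcomp Require Import Rstruct Rstruct_topology.
From Coquelicot Require Import Coquelicot.

Local Open Scope R_scope.

Definition inD (z : C) : Prop := Cmod z < 1.

Definition fadd (f g : C -> C) : C -> C := fun z => (f z + g z)%C.
Definition fsub (f g : C -> C) : C -> C := fun z => (f z - g z)%C.
Definition fscal (c : C) (f : C -> C) : C -> C := fun z => (c * f z)%C.
Definition fzero : C -> C := fun _ => RtoC 0.

Fixpoint cpow (z : C) (n : nat) : C :=
  match n with O => RtoC 1 | S m => (cpow z m * z)%C end.

Definition monom (n : nat) : C -> C := fun z => cpow z n.

Definition cis (t : R) : C := (cos t, sin t).

Definition holo_at (f : C -> C) (z : C) : Prop :=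
  @ex_derive C_AbsRing C_NormedModule f z.
Definition analytic_in_D (f : C -> C) : Prop := forall z, inD z -> holo_at f z.
Definition entire (f : C -> C) : Prop := forall z, holo_at f z.

Definition I02pi : set R := `[0%R, (2 * PI)%R]%classic.

Definition L1_02pi (g : R -> C) : Prop :=
  (@lebesgue_measure R).-integrable I02pi (fun t => (Re (g t))%:E) /\
  (@lebesgue_measure R).-integrable I02pi (fun t => (Im (g t))%:E).

Definition Cint02pi (h : R -> C) : C :=
  (Rintegral (@lebesgue_measure R) I02pi (fun t => Re (h t)),
   Rintegral (@lebesgue_measure R) I02pi (fun t => Im (h t))).

Definition conv_op (f : C -> C) (g : R -> C) : C -> C :=
  fun z => (RtoC (/ (2 * PI)) * Cint02pi (fun t => (f (z * cis t) * g t)%C))%C.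

Definition L1norm_02pi (g : R -> C) : R :=
  / (2 * PI) * Rintegral (@lebesgue_measure R) I02pi (fun t => Cmod (g t)).

(* X is described by its carrier [inX] (a set of functions C -> C, only their
   values on D matter) and its norm [nrm]. *)
Definition admissible_space (inX : (C -> C) -> Prop) (nrm : (C -> C) -> R)
  : Prop :=
  (forall f g, (forall z, inD z -> f z = g z) -> inX f ->
      inX g /\ nrm g = nrm f) /\
  (forall f, inX f -> analytic_in_D f) /\
  inX fzero /\
  (forall f g, inX f -> inX g -> inX (fadd f g)) /\
  (forall c f, inX f -> inX (fscal c f)) /\
  (forall f, inX f -> 0 <= nrm f) /\
  (forall f, inX f -> nrm f = 0 -> forall z, inD z -> f z = RtoC 0) /\
  (forall c f, inX f -> nrm (fscal c f) = Cmod c * nrm f) /\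
  (forall f g, inX f -> inX g -> nrm (fadd f g) <= nrm f + nrm g) /\
  (forall u : nat -> C -> C, (forall n, inX (u n)) ->
     (forall eps, 0 < eps -> exists N, forall m n, (N <= m)%nat -> (N <= n)%nat ->
        nrm (fsub (u m) (u n)) < eps) ->
     exists l, inX l /\ forall eps, 0 < eps -> exists N, forall n, (N <= n)%nat ->
        nrm (fsub (u n) l) < eps) /\
  (forall f t, inX f -> inX (fun z => f (z * cis t)%C) /\
                        nrm (fun z => f (z * cis t)%C) = nrm f) /\
  (forall f, entire f -> inX f) /\
  (forall f g, inX f -> L1_02pi g ->
     inX (conv_op f g) /\ nrm (conv_op f g) <= L1norm_02pi g * nrm f).

Definition gint (a : Z * Z) : C := (IZR (fst a), IZR (snd a)).

Fixpoint psum (c : nat -> C) (z : C) (n : nat) : C :=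
  match n with
  | O => RtoC 0
  | S m => (psum c z m + c m * cpow z m)%C
  end.

(* p is in P_n[Z]: a polynomial of degree <= n-1 with Gaussian integer
   coefficients *)
Definition in_PnZ (n : nat) (p : C -> C) : Prop :=
  exists a : nat -> Z * Z, forall z, p z = psum (fun k => gint (a k)) z n.

Definition is_Zpoly_on_D (f : C -> C) : Prop :=
  exists (n : nat) (a : nat -> Z * Z),
    forall z, inD z -> f z = psum (fun k => gint (a k)) z n.

From Stdlib Require Import Reals ZArith Lra Lia.
From mathcomp Require Import all_boot all_algebra.
From mathcomp Require Import all_classical all_reals all_analysis.
From mathcomp Require Import Rstruct Rstruct_topology.
From Coquelicot Require Import Coquelicot.

(* For a polynomial q of degree < N, averaging w^(-jk) q (w^j z) over the N-th
   roots of unity w^j isolates the monomial q_k z^k.  Rotation invariance (i)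
   and the triangle inequality bound the norm of that average by |q|, so
   |q_k| |z^k| <= |q|.  If |z^k| >= c > 0 for
   all k, a polynomial with Gaussian integer coefficients and norm < c thus has
   all coefficients of modulus < 1, i.e. zero.  Hence p_n - p_m = 0 once both
   are c/2-close to f: the approximants are eventually a fixed p, and
   |f - p| = lim |f - p_n| = 0, so f = p on the disc. *)

Local Open Scope R_scope.

Lemma C_pair_eq (a b c d : R) : a = c -> b = d -> ((a, b) : C) = (c, d).
Proof. by move=> -> ->. Qed.

Lemma cpow_mul a b n : cpow (a * b) n = (cpow a n * cpow b n)%C.
Proof. by elim: n => [|n IH] /=; [ring | rewrite IH; ring]. Qed.

Lemma cpow_1 n : cpow (RtoC 1) n = RtoC 1.
Proof. by elim: n => [//|n IH] /=; rewrite IH; ring. Qed.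

Lemma cis_add a b : cis (a + b) = (cis a * cis b)%C.
Proof.
rewrite /cis /Cmult /=; apply: C_pair_eq.
- by rewrite trigo.cosD.
- by rewrite trigo.sinD /GRing.add /= Rplus_comm.
Qed.

Lemma cis0 : cis 0 = RtoC 1.
Proof. by rewrite /cis trigo.cos0 trigo.sin0. Qed.

Lemma cos2_add_sin2 t : cos t * cos t + sin t * sin t = 1.
Proof. by have := trigo.cos2Dsin2 t; rewrite !GRing.expr2. Qed.

Lemma Cmod_cis t : Cmod (cis t) = 1.
Proof. by rewrite /Cmod /cis /= !Rmult_1_r cos2_add_sin2 sqrt_1. Qed.

Lemma cpow_cis n t : cpow (cis t) n = cis (INR n * t).
Proof.
elim: n => [|n IH]; first by rewrite Rmult_0_l cis0.
by rewrite S_INR /= IH -cis_add; f_equal; ring.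
Qed.

Lemma cis_opp_eq1 t : cis (- t) = RtoC 1 -> cis t = RtoC 1.
Proof.
move=> H; rewrite -(Cmult_1_l (cis t)) -H -cis_add.
by rewrite Rplus_opp_l cis0.
Qed.

Lemma cis_2pi_nat n : cis (INR n * (2 * pi)) = RtoC 1.
Proof.
have E : INR n * (2 * pi) = GRing.natmul (GRing.natmul (pi : R) 2) n.
  by rewrite -GRing.mulr_natl -INRE GRing.mulr2n /GRing.mul /GRing.add /=; ring.
rewrite /cis E.
have := trigo.periodicn (@trigo.cosD2pi R) n 0.
have := trigo.periodicn (@trigo.sinD2pi R) n 0.
rewrite !GRing.add0r trigo.cos0 trigo.sin0 => -> ->; reflexivity.
Qed.

(* cos (2 h) = 1 - 2 sin^2 h < 1 for h = t / 2 in (0, pi) *)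
Lemma cis_neq1 t : 0 < t < 2 * pi -> cis t <> RtoC 1.
Proof.
move=> t_bounds Ht.
have Hcos : cos t = 1 by move: Ht; rewrite /cis => [[]].
have [h Hh] : exists h, t = h + h by exists (t / 2); field.
have [h_gt0 h_lt] : 0 < h < pi by lra.
have Hsin : 0 < sin h.
  by apply/RltP; apply: trigo.sin_gt0_pi; apply/andP; split; apply/RltP.
have Hdouble : cos t = cos h * cos h - sin h * sin h by rewrite Hh; exact: trigo.cosD.
have := cos2_add_sin2 h; nra.
Qed.

Lemma cis_eq1_frac (r N : R) :
  0 < N -> - N < r < N -> cis (r * (2 * pi / N)) = RtoC 1 -> r = 0.
Proof.
move=> N_gt0 [r_gtN r_ltN] Hr.
have pi_gt0 : 0 < pi by apply/RltP; exact: trigo.pi_gt0.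
have Hfrac : forall s, 0 < s < N -> 0 < s * (2 * pi / N) < 2 * pi.
  move=> s [s_gt0 s_ltN]; split.
  - apply: Rmult_lt_0_compat => //; apply: Rdiv_lt_0_compat; lra.
  - rewrite -[X in _ < X]Rmult_1_l (_ : s * (2 * pi / N) = s / N * (2 * pi)); last by field; lra.
    apply: Rmult_lt_compat_r; first lra.
    by apply/Rlt_div_l; lra.
case: (Rtotal_order r 0) => [r_lt0 | [// | r_gt0]].
- apply: False_ind; apply: (cis_neq1 (- r * (2 * pi / N))); first by apply: Hfrac; lra.
  by apply: cis_opp_eq1; rewrite -Ropp_mult_distr_l Ropp_involutive.
- by apply: False_ind; apply: (cis_neq1 (r * (2 * pi / N))) => //; apply: Hfrac.
Qed.

Fixpoint csum (u : nat -> C) (n : nat) : C :=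
  match n with O => RtoC 0 | S n => (csum u n + u n)%C end.

Lemma eq_csum u v n : (forall j, lt j n -> u j = v j) -> csum u n = csum v n.
Proof.
elim: n => [//|n IH] Huv /=.
rewrite IH ?Huv; [by [] | lia | by move=> j Hj; apply: Huv; lia].
Qed.

Lemma csum_scal c u n : csum (fun j => c * u j)%C n = (c * csum u n)%C.
Proof. elim: n => [|n IH] /=; [ring | rewrite IH; ring]. Qed.

Lemma csum_const1 n : csum (fun _ => RtoC 1) n = RtoC (INR n).
Proof.
elim: n => [//|n IH]; rewrite S_INR /= IH.
by rewrite /RtoC /Cplus /=; apply: C_pair_eq; ring.
Qed.

Lemma csum_geometric w n : ((w - 1) * csum (cpow w) n = cpow w n - 1)%C.
Proof. elim: n => [|n IH] /=; [ring | rewrite Cmult_plus_distr_l IH; ring]. Qed.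

Lemma csum_root_of_unity w n :
  w <> RtoC 1 -> cpow w n = RtoC 1 -> csum (cpow w) n = RtoC 0.
Proof.
move=> w_neq1 Hwn.
have w1_neq0 : (w - 1)%C <> RtoC 0.
  by move=> E; apply: w_neq1; rewrite -(Cplus_0_l (RtoC 1)) -E; ring.
replace (csum (cpow w) n) with (/ (w - 1) * ((w - 1) * csum (cpow w) n))%C
  by (field; exact: w1_neq0).
by rewrite csum_geometric Hwn; ring.
Qed.

Lemma csum_cis_orthogonal N m k : lt m N -> lt k N ->
  csum (fun j => cis (INR j * ((INR m - INR k) * (2 * pi / INR N)))) N
  = if Nat.eqb m k then RtoC (INR N) else RtoC 0.
Proof.
move=> m_lt k_lt.
have N_gt0 : 0 < INR N by apply: lt_0_INR; lia.
rewrite (eq_csum _ (cpow (cis ((INR m - INR k) * (2 * pi / INR N))))); last first.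
  by move=> j _; rewrite cpow_cis.
case: (Nat.eqb_spec m k) => [-> | m_neq_k].
- by rewrite Rminus_diag Rmult_0_l cis0 (eq_csum _ _ _ (fun j _ => cpow_1 j)) csum_const1.
- apply: csum_root_of_unity.
  + move=> Hw; apply: m_neq_k; apply: INR_eq.
    have := lt_INR _ _ m_lt; have := lt_INR _ _ k_lt; have := pos_INR m; have := pos_INR k.
    move=> *; suff : INR m - INR k = 0 by lra.
    by apply: (cis_eq1_frac _ (INR N)) => //; lra.
  + rewrite cpow_cis (_ : _ * _ = INR m * (2 * pi) + - (INR k * (2 * pi))); last by field; lra.
    rewrite cis_add cis_2pi_nat.
    rewrite (_ : cis (- _) = RtoC 1) ?Cmult_1_l //.
    by apply: cis_opp_eq1; rewrite Ropp_involutive cis_2pi_nat.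
Qed.

Lemma eq_psum a b z M :
  (forall m, lt m M -> a m = b m) -> psum a z M = psum b z M.
Proof.
elim: M => [//|M IH] Hab /=.
rewrite IH ?Hab; [by [] | lia | by move=> m Hm; apply: Hab; lia].
Qed.

Lemma psum0 z M : psum (fun _ => RtoC 0) z M = RtoC 0.
Proof. elim: M => [//|M IH] /=; rewrite IH; ring. Qed.

Lemma psum_add a b z M :
  (psum a z M + psum b z M)%C = psum (fun m => a m + b m)%C z M.
Proof. elim: M => [|M IH] /=; [ring | rewrite -IH; ring]. Qed.

Lemma psum_sub a b z M :
  (psum a z M - psum b z M)%C = psum (fun m => a m - b m)%C z M.
Proof. elim: M => [|M IH] /=; [ring | rewrite -IH; ring]. Qed.

Lemma psum_scal c a z M : (c * psum a z M)%C = psum (fun m => c * a m)%C z M.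
Proof. elim: M => [|M IH] /=; [ring | rewrite -IH; ring]. Qed.

Lemma psum_mul_cis d z s M :
  psum d (z * cis s)%C M = psum (fun m => d m * cis (INR m * s))%C z M.
Proof. elim: M => [//|M IH] /=; rewrite IH cpow_mul cpow_cis; ring. Qed.

Lemma psum_delta d z k M : lt k M ->
  psum (fun m => d m * (if Nat.eqb m k then RtoC 1 else RtoC 0))%C z M
  = (d k * cpow z k)%C.
Proof.
elim: M => [|M IH] k_lt /=; first lia.
case: (Nat.eqb_spec M k) => [-> | M_neq_k].
- rewrite (eq_psum _ (fun _ => RtoC 0)) ?psum0; first ring.
  by move=> m m_lt; case: (Nat.eqb_spec m k) => [|_]; [lia | ring].
- by rewrite IH; [ring | lia].
Qed.

Lemma csum_psum e z M J :
  csum (fun j => psum (e j) z M) J = psum (fun m => csum (fun j => e j m) J) z M.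
Proof.
elim: J => [|J IH] /=; first by rewrite psum0.
by rewrite IH psum_add.
Qed.

Lemma holo_at_of_is_derive g z df :
  @is_derive C_AbsRing (AbsRing_NormedModule C_AbsRing) g z df -> holo_at g z.
Proof.
move=> Hg; rewrite /holo_at.
apply: (@ex_derive_ext C_AbsRing C_NormedModule
  (fun x => @scal C_AbsRing C_NormedModule (g x) (RtoC 1))).
- by move=> t; exact: Cmult_1_r.
- by apply: ex_derive_scal_l; exists df.
Qed.

Lemma cpow_is_derive n z : exists df,
  @is_derive C_AbsRing (AbsRing_NormedModule C_AbsRing) (fun w => cpow w n) z df.
Proof.
elim: n => [|n [df Hdf]] /=; first by eexists; apply: is_derive_const.
eexists; apply: (@is_derive_mult C_AbsRing (fun w => cpow w n) (fun w => w)).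
- exact: Hdf.
- exact: is_derive_id.
- exact: Cmult_comm.
Qed.

Lemma psum_is_derive d M z : exists df,
  @is_derive C_AbsRing (AbsRing_NormedModule C_AbsRing) (fun w => psum d w M) z df.
Proof.
elim: M => [|M [df1 H1]] /=; first by eexists; apply: is_derive_const.
have [df2 H2] := cpow_is_derive M z.
eexists; apply (@is_derive_plus C_AbsRing (AbsRing_NormedModule C_AbsRing)
  (fun w => psum d w M) (fun w => d M * cpow w M)%C); first exact: H1.
apply (@is_derive_mult C_AbsRing (fun _ => d M) (fun w => cpow w M)).
- exact: is_derive_const.
- exact: H2.
- exact: Cmult_comm.
Qed.

Lemma psum_entire d M : entire (fun z => psum d z M).
Proof. by move=> z; have [df Hdf] := psum_is_derive d M z; exact: holo_at_of_is_derive Hdf. Qed.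

Definition rotate (s : R) (q : C -> C) : C -> C := fun z => q (z * cis s)%C.

Fixpoint fsum (g : nat -> C -> C) (J : nat) : C -> C :=
  match J with O => fzero | S J => fadd (fsum g J) (g J) end.

Lemma fsum_apply g J z : fsum g J z = csum (fun j => g j z) J.
Proof. by elim: J => [//|J IH]; rewrite /= /fadd IH. Qed.

(* the term q_k z^k of q (when deg q < N), isolated by averaging N rotations *)
Definition coef_extract (N k : nat) (q : C -> C) : C -> C :=
  fsum (fun j => fscal (RtoC (/ INR N) * cis (- (INR k * (INR j * (2 * pi / INR N)))))%C
                       (rotate (INR j * (2 * pi / INR N)) q)) N.

Lemma coef_extract_psum N k d z : lt k N ->
  coef_extract N k (fun w => psum d w N) z = (d k * cpow z k)%C.
Proof.
move=> k_lt; have N_gt0 : 0 < INR N by apply: lt_0_INR; lia.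
rewrite /coef_extract fsum_apply /fscal /rotate.
under eq_csum => j _ do rewrite psum_mul_cis psum_scal.
rewrite csum_psum -(psum_delta d z k N k_lt).
apply: eq_psum => m m_lt.
set tau := 2 * pi / INR N.
rewrite (eq_csum _ (fun j => (d m * RtoC (/ INR N))
  * cis (INR j * ((INR m - INR k) * tau)))%C); last first.
  move=> j _; rewrite (_ : INR j * ((INR m - INR k) * tau)
                           = - (INR k * (INR j * tau)) + INR m * (INR j * tau)); last by ring.
  by rewrite cis_add; ring.
rewrite csum_scal csum_cis_orthogonal //.
case: (Nat.eqb m k); last by ring.
by rewrite -Cmult_assoc -RtoC_mult Rinv_l; [ring | lra].
Qed.

Lemma C_sub_eq0 (a b : C) : (a - b)%C = RtoC 0 -> a = b.
Proof. by move=> E; replace a with ((a - b) + b)%C by ring; rewrite E; ring. Qed.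

Lemma gint_sub a b : (gint a - gint b)%C = gint (Z.sub (fst a) (fst b), Z.sub (snd a) (snd b)).
Proof. by rewrite /gint /Cminus /Cplus /Copp /=; apply: C_pair_eq; rewrite minus_IZR. Qed.

Lemma Rabs_IZR_ge1 (x : Z) : x <> Z0 -> 1 <= Rabs (IZR x).
Proof. by move=> /Z.abs_pos x_pos; rewrite Rabs_Zabs; apply: IZR_le; lia. Qed.

Lemma gint_eq0_of_Cmod_lt1 a : Cmod (gint a) < 1 -> gint a = RtoC 0.
Proof.
case: a => x y /= a_lt1.
have Hmax := Rmax_Cmod (gint (x, y)); rewrite /= in Hmax.
have [x_eq0 | x_neq0] := Z.eq_dec x 0; last first.
  have := Rabs_IZR_ge1 _ x_neq0; have := Rmax_l (Rabs (IZR x)) (Rabs (IZR y)); lra.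
have [y_eq0 | y_neq0] := Z.eq_dec y 0; first by rewrite x_eq0 y_eq0.
have := Rabs_IZR_ge1 _ y_neq0; have := Rmax_r (Rabs (IZR x)) (Rabs (IZR y)); lra.
Qed.

Lemma in_PnZ_widen n M p : le n M -> in_PnZ n p -> in_PnZ M p.
Proof.
move=> n_le [a Ha]; exists (fun m => if Nat.ltb m n then a m else (Z0, Z0)) => z.
rewrite Ha; elim: n_le => [|M' n_le IH].
- by apply: eq_psum => m m_lt; move/Nat.ltb_lt: m_lt => ->.
- rewrite /= -IH; move/Nat.ltb_ge: n_le => ->.
  by change (gint (Z0, Z0)) with (RtoC 0); ring.
Qed.

Lemma in_PnZ_sub M p q : in_PnZ M p -> in_PnZ M q -> in_PnZ M (fsub p q).
Proof.
move=> [a Ha] [b Hb].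
exists (fun m => (Z.sub (fst (a m)) (fst (b m)), Z.sub (snd (a m)) (snd (b m)))) => z.
by rewrite /fsub Ha Hb psum_sub; apply: eq_psum => m _; rewrite gint_sub.
Qed.

Section AdmissibleSpace.

Variables (inX : (C -> C) -> Prop) (nrm : (C -> C) -> R).
Hypothesis HX : admissible_space inX nrm.

Lemma inX_eq_on_D f g : (forall z, inD z -> f z = g z) -> inX f -> inX g.
Proof. by case: HX => Hext _ Efg Hf; case: (Hext f g Efg Hf). Qed.

Lemma nrm_eq_on_D f g : (forall z, inD z -> f z = g z) -> inX f -> nrm g = nrm f.
Proof. by case: HX => Hext _ Efg Hf; case: (Hext f g Efg Hf). Qed.

Lemma inX_fzero : inX fzero.
Proof. by case: HX => _ [_ [H _]]. Qed.

Lemma inX_fadd f g : inX f -> inX g -> inX (fadd f g).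
Proof. by case: HX => _ [_ [_ [H _]]]; apply: H. Qed.

Lemma inX_fscal c f : inX f -> inX (fscal c f).
Proof. by case: HX => _ [_ [_ [_ [H _]]]]; apply: H. Qed.

Lemma nrm_ge0 f : inX f -> 0 <= nrm f.
Proof. by case: HX => _ [_ [_ [_ [_ [H _]]]]]; apply: H. Qed.

Lemma nrm_eq0_on_D f : inX f -> nrm f = 0 -> forall z, inD z -> f z = RtoC 0.
Proof. by case: HX => _ [_ [_ [_ [_ [_ [H _]]]]]]; apply: H. Qed.

Lemma nrm_fscal c f : inX f -> nrm (fscal c f) = Cmod c * nrm f.
Proof. by case: HX => _ [_ [_ [_ [_ [_ [_ [H _]]]]]]]; apply: H. Qed.

Lemma nrm_fadd_le f g : inX f -> inX g -> nrm (fadd f g) <= nrm f + nrm g.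
Proof. by case: HX => _ [_ [_ [_ [_ [_ [_ [_ [H _]]]]]]]]; apply: H. Qed.

Lemma inX_rotate s f : inX f -> inX (rotate s f).
Proof. by case: HX => _ [_ [_ [_ [_ [_ [_ [_ [_ [_ [H _]]]]]]]]]] Hf; case: (H f s Hf). Qed.

Lemma nrm_rotate s f : inX f -> nrm (rotate s f) = nrm f.
Proof. by case: HX => _ [_ [_ [_ [_ [_ [_ [_ [_ [_ [H _]]]]]]]]]] Hf; case: (H f s Hf). Qed.

Lemma inX_entire f : entire f -> inX f.
Proof. by case: HX => _ [_ [_ [_ [_ [_ [_ [_ [_ [_ [_ [H _]]]]]]]]]]]; apply: H. Qed.

Lemma nrm_fzero : nrm fzero = 0.
Proof.
have H0 := inX_fzero.
rewrite (nrm_eq_on_D (fscal (RtoC 0) fzero) fzero).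
- by rewrite nrm_fscal // Cmod_0 Rmult_0_l.
- by move=> z _; rewrite /fscal /fzero; ring.
- exact: inX_fscal.
Qed.

Lemma inX_fsub f g : inX f -> inX g -> inX (fsub f g).
Proof.
move=> Hf Hg; apply: (inX_eq_on_D (fadd f (fscal (RtoC (-1)) g))).
- by move=> z _; rewrite /fadd /fscal /fsub; ring.
- by apply: inX_fadd => //; apply: inX_fscal.
Qed.

Lemma nrm_fsub_le f g h : inX (fsub f g) -> inX (fsub f h) ->
  nrm (fsub g h) <= nrm (fsub f g) + nrm (fsub f h).
Proof.
move=> Hfg Hfh.
rewrite (nrm_eq_on_D (fadd (fsub f h) (fscal (RtoC (-1)) (fsub f g)))).
- rewrite Rplus_comm; apply: Rle_trans (nrm_fadd_le _ _ _ _) _ => //; first exact: inX_fscal.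
  by rewrite nrm_fscal // Cmod_R Rabs_Ropp Rabs_R1 Rmult_1_l; apply: Rle_refl.
- by move=> z _; rewrite /fadd /fscal /fsub; ring.
- by apply: inX_fadd => //; apply: inX_fscal.
Qed.

Lemma inX_psum d M : inX (fun z => psum d z M).
Proof. exact/inX_entire/psum_entire. Qed.

Lemma inX_monom k : inX (monom k).
Proof.
apply: inX_entire => z; have [df Hdf] := cpow_is_derive k z.
exact: holo_at_of_is_derive Hdf.
Qed.

Lemma inX_fsum g J : (forall j, inX (g j)) -> inX (fsum g J).
Proof.
move=> Hg; elim: J => [|J IH] /=; first exact: inX_fzero.
exact: inX_fadd.
Qed.

Lemma nrm_fsum_le g J B : (forall j, inX (g j)) -> (forall j, nrm (g j) <= B) ->
  nrm (fsum g J) <= INR J * B.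
Proof.
move=> Hg HB; elim: J => [|J IH]; first by rewrite /= nrm_fzero; lra.
rewrite S_INR; apply: Rle_trans (nrm_fadd_le _ _ (inX_fsum g J Hg) (Hg J)) _.
by have := HB J; lra.
Qed.

Lemma nrm_coef_extract_le N k q : lt 0 N -> inX q -> nrm (coef_extract N k q) <= nrm q.
Proof.
move=> N_gt0 Hq; have N_gt0' : 0 < INR N by apply: lt_0_INR.
rewrite -[X in _ <= X](Rmult_1_l) -(Rinv_r (INR N)); last lra.
rewrite Rmult_assoc; apply: nrm_fsum_le => j.
- exact/inX_fscal/inX_rotate.
- rewrite nrm_fscal; last exact: inX_rotate.
  rewrite nrm_rotate // Cmod_mult Cmod_cis Cmod_R Rmult_1_r.
  by rewrite Rabs_pos_eq; [apply: Rle_refl | apply/Rlt_le/Rinv_0_lt_compat].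
Qed.

Lemma nrm_coef_le d M k : lt k M ->
  Cmod (d k) * nrm (monom k) <= nrm (fun z => psum d z M).
Proof.
move=> k_lt; rewrite -nrm_fscal; last exact: inX_monom.
rewrite (nrm_eq_on_D (coef_extract M k (fun w => psum d w M)) (fscal (d k) (monom k))).
- by apply: nrm_coef_extract_le; [lia | exact: inX_psum].
- by move=> z _; rewrite coef_extract_psum.
- by apply: inX_fsum => j; apply/inX_fscal/inX_rotate/inX_psum.
Qed.

Lemma inX_PnZ M q : in_PnZ M q -> inX q.
Proof.
case=> a Ha; apply: (inX_eq_on_D (fun z => psum (fun k => gint (a k)) z M)).
- by move=> z _; rewrite Ha.
- exact: inX_psum.
Qed.

(* a nonzero Gaussian integer has modulus at least 1, so by [nrm_coef_le] a
   nonzero coefficient would force the norm of q up to c *)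
Lemma PnZ_eq0_of_nrm_lt c M q : (forall m, c <= nrm (monom m)) ->
  in_PnZ M q -> nrm q < c -> forall z, q z = RtoC 0.
Proof.
move=> Hc Hq_PnZ q_lt z.
have q_in := inX_PnZ _ _ Hq_PnZ; case: Hq_PnZ => a Ha.
have Hq : nrm q = nrm (fun z => psum (fun k => gint (a k)) z M).
  by apply: nrm_eq_on_D => [w _|]; [rewrite Ha | exact: inX_psum].
rewrite Ha -(psum0 z M); apply: eq_psum => m m_lt.
apply: gint_eq0_of_Cmod_lt1; case: (Rlt_le_dec (Cmod (gint (a m))) 1) => // a_ge1.
have := nrm_coef_le (fun k => gint (a k)) _ _ m_lt; rewrite -Hq /=.
have := Hc m; have := nrm_ge0 q q_in; nra.
Qed.

End AdmissibleSpace.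

Theorem theorem5p1 (inX : (C -> C) -> Prop) (nrm : (C -> C) -> R)
  (f : C -> C) :
  admissible_space inX nrm ->
  inX f ->
  (exists c : R, Rlt 0 c /\ forall n : nat, Rle c (nrm (monom n))) ->
  (exists p : nat -> C -> C,
     (forall n, in_PnZ n (p n)) /\
     forall eps : R, Rlt 0 eps -> exists N : nat, forall n : nat,
       le N n -> Rlt (nrm (fsub f (p n))) eps) ->
  is_Zpoly_on_D f.
Proof.
move=> HX f_in [c [c_gt0 Hc]] [p [Hp Hlim]].
have fp_in n : inX (fsub f (p n)).
  by apply: (inX_fsub _ _ HX) => //; exact: (inX_PnZ _ _ HX _ _ (Hp n)).
have [N0 HN0] := Hlim (c / 2) ltac:(lra).
have p_stable n : le N0 n -> forall z, p n z = p N0 z.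
  move=> n_ge z; apply: C_sub_eq0.
  apply: (PnZ_eq0_of_nrm_lt _ _ HX c (Nat.max n N0) (fsub (p n) (p N0))) => //.
  - by apply: in_PnZ_sub; apply: in_PnZ_widen (Hp _); lia.
  - apply: Rle_lt_trans (nrm_fsub_le _ _ HX f _ _ (fp_in n) (fp_in N0)) _.
    by have := HN0 n n_ge; have := HN0 N0 (le_n N0); lra.
have nrm_fp_eq0 : nrm (fsub f (p N0)) = 0.
  apply: Rle_antisym (nrm_ge0 _ _ HX _ (fp_in N0)); apply: Rnot_lt_le => nrm_gt0.
  have [N1 HN1] := Hlim _ nrm_gt0; have := HN1 (Nat.max N0 N1) ltac:(lia).
  rewrite (nrm_eq_on_D _ _ HX (fsub f (p N0))); first lra; last exact: fp_in.
  by move=> z _; rewrite /fsub p_stable //; lia.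
have [b Hb] := Hp N0; exists N0, b => z z_in; rewrite -Hb.
by apply: C_sub_eq0; apply: nrm_eq0_on_D _ _ HX _ (fp_in N0) nrm_fp_eq0 z z_in.
Qed.
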